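(* Let $n$ be a positive integer and $r$ a positive divisor of $n$. For every $\chi:\mathbb Z_r\to\{1,-1\}$, \[\operatorname{disc}(\mathcal A_n)\le \max_{A\in\mathcal A_r}|\chi(A)|+\frac{n}{r}\cdot\max_{A_0\in\mathcal A_r^0}|\chi(A_0)|.\]
   Context: For a positive integer $N$, an arithmetic progression in $\mathbb{Z}_N$ is a set $\{a+kd: 0\le k<l\}$ with $a,d\in\mathbb{Z}_N$ and $l$ an integer with $0\le l\le N/\gcd(N,d)$ (with $\gcd(0,N)=N$); $\mathcal A_N$ is the family of all of them. For $s,i\in\mathbb{Z}_N$, $C(s,i)=\{x\in\mathbb{Z}_N: x=i+ks \text{ for some } k\in\mathbb{Z}_N\}$ (the congruence class of $i$ modulo $s$), and $\mathcal A_N^0=\{C(s,i): s,i\in\mathbb{Z}_N\}$. For $\chi$ and a set $B$, $\chi(B)=\sum_{x\in B}\chi(x)$, and $\operatorname{disc}(\mathcal A_N)=\min_{\chi:\mathbb{Z}_N\to\{1,-1\}}\max_{A\in\mathcal A_N}|\chi(A)|$. *)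

(* Z_N is represented by 'I_N (residues 0..N-1) with
   arithmetic modulo N done on the underlying naturals. *)
From mathcomp Require Import all_boot all_order all_algebra.
Set Implicit Arguments. Unset Strict Implicit. Unset Printing Implicit Defensive.
Import Order.TTheory GRing.Theory Num.Theory.

Definition APset (N : nat) (a d l : nat) : {set 'I_N} :=
  [set x : 'I_N | [exists k : 'I_l, nat_of_ord x == (a + k * d) %% N]].

(* A \in A_N : a, d in Z_N and 0 <= l <= N / gcd(N,d)  (gcdn N 0 = N). *)
Definition isAP (N : nat) (A : {set 'I_N}) : bool :=
  [exists a : 'I_N, exists d : 'I_N, exists l : 'I_N.+1,
     (l <= N %/ gcdn N d)%N && (A == APset N a d l)].

Definition Cset (N : nat) (s i : nat) : {set 'I_N} :=
  [set x : 'I_N | [exists k : 'I_N, nat_of_ord x == (i + k * s) %% N]].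

Definition isC (N : nat) (A : {set 'I_N}) : bool :=
  [exists s : 'I_N, exists i : 'I_N, A == Cset N s i].

Definition chisum (N : nat) (chi : 'I_N -> int) (B : {set 'I_N}) : int :=
  (\sum_(x in B) chi x)%R.

Definition maxAP (N : nat) (chi : 'I_N -> int) : nat :=
  \max_(A : {set 'I_N} | isAP A) `|chisum chi A|%N.

Definition maxC (N : nat) (chi : 'I_N -> int) : nat :=
  \max_(A : {set 'I_N} | isC A) `|chisum chi A|%N.

Definition sgnf (N : nat) (f : {ffun 'I_N -> bool}) : 'I_N -> int :=
  fun x => if f x then 1%R else (-1)%R.

(* disc(A_N) = min over colourings chi of max_{A in A_N} |chi(A)|.
   The default N of the min is harmless: every maxAP value is <= N. *)
Definition disc (N : nat) : nat :=
  \big[minn/N]_(f : {ffun 'I_N -> bool}) maxAP (sgnf f).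

From mathcomp Require Import all_boot all_order all_algebra zify.
Set Implicit Arguments. Unset Strict Implicit. Unset Printing Implicit Defensive.

(* Proof of Lemma 3.2.  Given chi on Z_r with r | n, colour Z_n by
   x |-> chi (x mod r); disc(A_n) is at most the maximal discrepancy of this
   colouring, so it suffices to bound |sum_{k<l} chi(a + k d mod r)| for every
   progression of Z_n.  Let p = r / gcd(r,d) be the period of k |-> k d mod r.
   A block of p consecutive terms runs exactly once through the congruence
   class C(d mod r, a mod r) of Z_r, so its sum is bounded by the A_r^0 bound;
   a block of fewer than p terms is a genuine progression of Z_r, bounded by
   the A_r bound.  Splitting the l terms into floor(l/p) full blocks and one
   short block gives maxAP + (l/p) maxC, and l <= n / gcd(n,d) forces
   l/p <= n/r. *)

(* The period of k |-> k d mod N: N / gcd(N,d) divides every m with N | m d. *)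
Definition period (N d : nat) : nat := N %/ gcdn N d.

Lemma period_gt0 N d : 0 < N -> 0 < period N d.
Proof.
move=> hN; rewrite divn_gt0 ?gcdn_gt0 ?hN //.
by rewrite dvdn_leq ?dvdn_gcdl.
Qed.

Lemma period_dvd N d m : 0 < N -> (N %| m * d) -> (period N d %| m).
Proof.
move=> hN; set g := gcdn N d.
have g_gt0 : 0 < g by rewrite gcdn_gt0 hN.
have eN : N = g * (N %/ g) by rewrite mulnC divnK // dvdn_gcdl.
have ed : d = g * (d %/ g) by rewrite mulnC divnK // dvdn_gcdr.
have cop : coprime (N %/ g) (d %/ g).
  by rewrite /coprime -(eqn_pmul2l g_gt0) muln_gcdr -eN -ed muln1.
by rewrite {1}eN {1}ed mulnCA dvdn_pmul2l // Gauss_dvdl.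
Qed.

Lemma progression_inj N a d k k' : 0 < N ->
  k < period N d -> k' < period N d ->
  (a + k * d) %% N = (a + k' * d) %% N -> k = k'.
Proof.
move=> hN; wlog kk' : k k' / k <= k'.
  move=> hwlog hk hk' he; case: (leqP k k') => c; first exact: hwlog.
  by apply/esym/hwlog => //; exact: ltnW.
move=> _ hk' /eqP; rewrite eqn_modDl eq_sym eqn_mod_dvd ?leq_mul // -mulnBl.
move/(period_dvd hN); case: (posnP (k' - k)) => [|k_lt]; first lia.
by move/(dvdn_leq k_lt); lia.
Qed.

Lemma chisum_APset N (hN : 0 < N) a d l (g : 'I_N -> int) : l <= period N d ->
  chisum g (APset N a d l) = (\sum_(k < l) g (Ordinal (ltn_pmod (a + k * d) hN)))%R.
Proof.
move=> hl; set F := fun k : 'I_l => Ordinal (ltn_pmod (a + k * d) hN).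
have -> : APset N a d l = F @: [set: 'I_l].
  apply/setP => x; rewrite inE; apply/existsP/imsetP.
    by move=> [k /eqP hx]; exists k; [rewrite in_setT | apply/val_inj].
  by move=> [k _ ->]; exists k.
rewrite /chisum big_imset /=; first by apply: eq_bigl => k; rewrite in_setT.
move=> k1 k2 _ _ /(congr1 val) /= h; apply/val_inj.
by apply: (progression_inj hN _ _ h); apply: leq_trans hl.
Qed.

Section PeriodicExtension.

Variables (r : nat) (hr : 0 < r) (chi : 'I_r -> int).

Definition chiper (m : nat) : int := chi (Ordinal (ltn_pmod m hr)).

Definition apsum (b d l : nat) : int := (\sum_(k < l) chiper (b + k * d))%R.

Lemma chiper_mod m : chiper (m %% r) = chiper m.
Proof. by rewrite /chiper; congr chi; apply/val_inj; rewrite /= modn_mod. Qed.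

Lemma chiper_congr m m' : m = m' %[mod r] -> chiper m = chiper m'.
Proof. by move=> e; rewrite -chiper_mod e chiper_mod. Qed.

Lemma apsum_APset b d l : l <= period r d ->
  chisum chi (APset r (b %% r) (d %% r) l) = apsum b d l.
Proof.
move=> hl; rewrite (chisum_APset hr); last by rewrite /period gcdn_modr.
apply: eq_bigr => k _; apply: (chiper_congr (m := _ + _)).
by rewrite -modnDmr modnMmr modnDmr modnDml.
Qed.

(* A short block is a progression of Z_r. *)
Lemma apsum_short b d l : l <= period r d -> `|apsum b d l|%N <= maxAP chi.
Proof.
move=> hl; have hl' : l < r.+1 by rewrite ltnS (leq_trans hl) // leq_div.
have hA : isAP (APset r (b %% r) (d %% r) l).
  apply/existsP; exists (Ordinal (ltn_pmod b hr)); apply/existsP.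
  exists (Ordinal (ltn_pmod d hr)); apply/existsP; exists (Ordinal hl').
  by rewrite /= gcdn_modr hl eqxx.
rewrite -apsum_APset //.
exact: (@leq_bigmax_cond _ _ (fun A => `|chisum chi A|%N) _ hA).
Qed.

Lemma APset_period b d : APset r b d (period r d) = Cset r d b.
Proof.
have p_gt0 := period_gt0 d hr.
have hpr : period r d <= r by rewrite leq_div.
have hpd : period r d * d = r * (d %/ gcdn r d) by rewrite muln_divCA_gcd mulnC.
apply/setP => x; rewrite !inE; apply/existsP/existsP.
  by move=> [k hk]; exists (widen_ord hpr k).
move=> [k /eqP ->]; exists (Ordinal (ltn_pmod k p_gt0)); apply/eqP => /=.
rewrite {1}(divn_eq k (period r d)) mulnDl -mulnA hpd mulnCA.
by rewrite addnCA [r * _]mulnC modnMDl.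
Qed.

Lemma apsum_period b d : `|apsum b d (period r d)|%N <= maxC chi.
Proof.
have hC : isC (APset r (b %% r) (d %% r) (period r d)).
  rewrite /period -(gcdn_modr r d) -/(period r (d %% r)) APset_period.
  by apply/existsP; exists (Ordinal (ltn_pmod d hr)); apply/existsP;
    exists (Ordinal (ltn_pmod b hr)).
rewrite -apsum_APset //.
exact: (@leq_bigmax_cond _ _ (fun A => `|chisum chi A|%N) _ hC).
Qed.

Lemma apsum_cat b d m l :
  apsum b d (m + l) = (apsum b d m + apsum (b + m * d) d l)%R.
Proof.
rewrite /apsum big_split_ord; congr (_ + _)%R.
by apply: eq_bigr => i _; rewrite mulnDl addnA.
Qed.

Lemma apsum_bound d l b :
  `|apsum b d l|%N <= maxAP chi + l %/ period r d * maxC chi.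
Proof.
have p_gt0 := period_gt0 d hr.
elim/ltn_ind: l b => l IH b.
case: (ltnP l (period r d)) => hl.
  by rewrite divn_small // mul0n addn0 apsum_short // ltnW.
have head := apsum_period b d.
have tail := IH (l - period r d) ltac:(lia) (b + period r d * d).
rewrite -(subnKC hl) apsum_cat divnDl // divnn p_gt0 mulnDl mul1n.
move: head tail; set S1 := apsum _ _ _; set S2 := apsum _ _ _; lia.
Qed.

Lemma period_count n d l : 0 < n -> r %| n -> l <= period n d ->
  l %/ period r d <= n %/ r.
Proof.
move=> hn hrn hl; have p_gt0 := period_gt0 d hr.
have g_le : gcdn r d <= gcdn n d.
  rewrite dvdn_leq ?gcdn_gt0 ?hn // dvdn_gcd dvdn_gcdr andbT.
  exact: dvdn_trans (dvdn_gcdl _ _) hrn.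
have n_period : n %/ gcdn r d = n %/ r * period r d.
  by rewrite /period muln_divA ?dvdn_gcdl // divnK.
rewrite -(mulnK (n %/ r) p_gt0) leq_div2r // -n_period.
by rewrite (leq_trans hl) // leq_div2l ?gcdn_gt0 ?hr.
Qed.

Lemma chisum_pullback n (hn : 0 < n) (hrn : r %| n) (g : 'I_n -> int) a d l :
  (forall x : 'I_n, g x = chiper x) -> l <= period n d ->
  chisum g (APset n a d l) = apsum a d l.
Proof.
move=> g_eq hl; rewrite (chisum_APset hn) //.
by apply: eq_bigr => k _; rewrite g_eq; apply: chiper_congr; rewrite /= modn_dvdm.
Qed.

Lemma maxAP_pullback n (hn : 0 < n) (hrn : r %| n) (g : 'I_n -> int) :
  (forall x : 'I_n, g x = chiper x) ->
  maxAP g <= maxAP chi + n %/ r * maxC chi.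
Proof.
move=> g_eq; apply/bigmax_leqP => A /existsP[a /existsP[d /existsP[l]]].
case/andP=> hl /eqP ->; rewrite (chisum_pullback hn hrn) //.
apply: leq_trans (apsum_bound d l a) _.
by rewrite leq_add2l leq_mul2r (period_count hn hrn hl) orbT.
Qed.

End PeriodicExtension.

Lemma disc_le_maxAP n (f : {ffun 'I_n -> bool}) : disc n <= maxAP (sgnf f).
Proof. exact: (@Order.TotalTheory.bigmin_le _ nat _ n f (fun g => maxAP (sgnf g))). Qed.

Theorem lemma3p2 (n r : nat) (hn : (0 < n)%N) (hr : (0 < r)%N) (hrn : (r %| n)%N)
  (chi : 'I_r -> int) (hchi : forall x, chi x = 1%R \/ chi x = (-1)%R) :
  (disc n <= maxAP chi + n %/ r * maxC chi)%N.
Proof.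
pose f := [ffun x : 'I_n => chiper hr chi x == 1%R].
have f_chi : forall x : 'I_n, sgnf f x = chiper hr chi x.
  by move=> x; rewrite /sgnf ffunE /chiper; case: (hchi (Ordinal (ltn_pmod x hr))) => ->.
exact: leq_trans (disc_le_maxAP f) (maxAP_pullback hn hrn f_chi).
Qed.
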